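(* Consider an infinite execution $\gamma_0\gamma_1\ldots$ of the unison dynamics with $\gamma_0$ satisfying $WU_0$, in which every process increments its clock infinitely often, and let $\bot_0$ and the cuts $C_k$ be as in the context. Let $k\ge\bot_0+D$ and $\varrho\ge 1$ be integers. Then $C_k$ and $C_{k+\varrho}$ are coherent cuts with $C_k\preceq C_{k+\varrho}$, and the segment $[C_k,C_{k+\varrho}]$, with the events of $C_{k+\varrho}$ taken as decide events, is a $\varrho$-wavelet.
   Context: Let $G=(V,E)$ be a finite connected undirected graph, $|V|=n\ge 2$, $\mathcal N_p$ the set of neighbors of $p$, $d(p,q)$ the hop distance, $D$ the diameter, and $V(p,r)=\{q\in V: d(p,q)\le r\}$. Fix an integer $M\ge 3$; for an integer $a$, $\bar a\in\{0,\dots,M-1\}$ denotes its residue modulo $M$. Each process $p$ holds a clock $p.r\in\{0,\dots,M-1\}$; $p^t.r$ denotes its value in configuration $\gamma_t$. Integers $a,b$ are locally comparable if $\min(\overline{a-b},\overline{b-a})\le 1$, and then $b\ominus a=\overline{b-a}$ if $\overline{b-a}\le 1$, and $b\ominus a=-\overline{a-b}$ otherwise. A configuration satisfies $WU$ if for every edge $\{p,q\}$, $p.r$ and $q.r$ are locally comparable. The delay of a path $\mu=p_0p_1\ldots p_k$ is $\delta_\mu=\sum_{i=0}^{k-1}(p_{i+1}.r\ominus p_i.r)$ ($0$ if $k=0$). A configuration satisfies $WU_0$ if it satisfies $WU$ and the delay is intrinsic: for all $p,q$, all paths from $p$ to $q$ have the same delay, denoted $\delta_{(p,q)}$ ($\delta^t_{(p,q)}$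 in $\gamma_t$). Dynamics: a process $p$ is enabled iff for every $q\in\mathcal N_p$, $q.r=p.r$ or $q.r=\overline{p.r+1}$. In a transition $\gamma_t\to\gamma_{t+1}$ a nonempty set of processes enabled in $\gamma_t$ is chosen (by an arbitrary, possibly unfair, daemon) and each of them sets $p.r:=\overline{p.r+1}$; other clocks are unchanged. Events: $(p,0)$ is an event for every $p$; $(p,t+1)$ is an event iff $p$ increments in $\gamma_t\to\gamma_{t+1}$. Causal relation $\leadsto$: for an event $(p,t)$ with $t>0$, $(p,t')\leadsto(p,t)$ where $t'$ is the largest time $<t$ such that $(p,t')$ is an event, and for each $q\in\mathcal N_p$, $(q,t')\leadsto(p,t)$ where $t'$ is the largest time $<t$ such that $(q,t')$ is an event. $\preceq$ is the reflexive–transitive closure of $\leadsto$. Lifting: assume $\gamma_0$ satisfies $WU_0$. Choose $p_0$ with $\delta^0_{(p_0,q)}\ge 0$ for all $q\in V$, and let $\bot_0=p_0^0.r$. Define integers $\widetilde{p^t.r}$ by $\widetilde{p^0.r}=\bot_0+\delta^0_{(p_0,p)}$, and $\widetilde{p^{t+1}.r}=\widetilde{p^t.r}+1$ if $p$ increments in $\gamma_t\to\gamma_{t+1}$, $\widetilde{p^{t+1}.r}=\widetilde{p^t.r}$ otherwise. For an integer $k$, $t_{p,k}$ is the smallest $t$ with $\widetilde{p^t.r}=k$, and $C_k=\{(p,t_{p,k}):p\in V\}$. A cut is a map $C:p\mapsto t^C_p$ (identified with $\{(p,t^C_p)\}$) with each $(p,t^C_p)$ an event. $C$ is coherent if whenever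 $(q,t')\preceq(p,t)\preceq(p,t^C_p)$, then $(q,t')\preceq(q,t^C_q)$. For cuts, $C\preceq C'$ means every event $(p,t)$ with $t\le t^C_p$ satisfies $t\le t^{C'}_p$. For coherent cuts $C\preceq C'$, the segment $[C,C']$ is the set of events $(p,t)$ with $(p,t^C_p)\preceq(p,t)\preceq(p,t^{C'}_p)$. A $\varrho$-wavelet is a segment $[C,C']$ together with a designated nonempty set of decide events in it such that for every decide event $(p,t)$, every process $q\in V(p,\varrho)$ has an event $(q,t')\in[C,C']$ with $(q,t')\preceq(p,t)$. *)

From HB Require Import structures.
From mathcomp Require Import all_boot all_order all_algebra.
From Stdlib Require Import Relation_Operators ClassicalEpsilon.
Set Implicit Arguments. Unset Strict Implicit. Unset Printing Implicit Defensive.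
Import Order.TTheory GRing.Theory Num.Theory.

Local Open Scope ring_scope.

Section Unison.
Variables (V : finType) (e : rel V) (M : nat).

Definition res (a : int) : int := (a %% (M%:Z))%Z.

Definition loc_comparable (a b : int) : bool :=
  Num.min (res (a - b)) (res (b - a)) <= 1.

Definition ominus (b a : int) : int :=
  if res (b - a) <= 1 then res (b - a) else - res (a - b).

Definition WU (c : V -> nat) : Prop :=
  forall p q, e p q -> loc_comparable (c p)%:Z (c q)%:Z.

Fixpoint delay (c : V -> nat) (x : V) (s : seq V) : int :=
  match s with
  | [::] => 0
  | y :: s' => ominus (c y)%:Z (c x)%:Z + delay c y s'
  end.

Definition WU0 (c : V -> nat) : Prop :=
  WU c /\
  forall p s1 s2, path e p s1 -> path e p s2 -> last p s1 = last p s2 ->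
    delay c p s1 = delay c p s2.

(* the intrinsic delay delta_(p,q): the delay of (some, hence any under WU0)
   path from p to q *)
Definition delta (c : V -> nat) (p q : V) : int :=
  epsilon (inhabits 0)
    (fun d => exists s, [/\ path e p s, last p s = q & delay c p s = d]).

Definition dist_le (p q : V) (r : nat) : Prop :=
  exists s, [/\ path e p s, last p s = q & (size s <= r)%N].

Definition is_diameter (D : nat) : Prop :=
  (forall p q, dist_le p q D) /\
  (exists p q, forall s, path e p s -> last p s = q -> (D <= size s)%N).

Definition connected : Prop := forall p q, exists s, path e p s /\ last p s = q.

(* executions: gamma t = configuration gamma_t, sched t = set of processes
   chosen by the daemon in gamma_t -> gamma_(t+1) *)
Definition enabled (c : V -> nat) (p : V) : Prop :=
  forall q, e p q -> c q = c p \/ c q = ((c p).+1 %% M)%N.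

Definition execution (gamma : nat -> V -> nat) (sched : nat -> V -> bool) : Prop :=
  (forall t p, (gamma t p < M)%N) /\
  forall t, [/\ exists p, sched t p,
                (forall p, sched t p -> enabled (gamma t) p) &
                (forall p, gamma t.+1 p =
                   if sched t p then ((gamma t p).+1 %% M)%N else gamma t p)].

Definition event (sched : nat -> V -> bool) (p : V) (t : nat) : Prop :=
  t = 0%N \/ exists t0, t = t0.+1 /\ sched t0 p.

Definition last_event_before (sched : nat -> V -> bool) (q : V) (t' t : nat) : Prop :=
  [/\ (t' < t)%N, event sched q t' &
      forall s, (t' < s)%N -> (s < t)%N -> ~ event sched q s].

Definition leadsto (sched : nat -> V -> bool) (a b : V * nat) : Prop :=
  let: (q, t') := a in let: (p, t) := b in
  [/\ (0 < t)%N, event sched p t, (q = p \/ e p q) & last_event_before sched q t' t].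

Definition preceq (sched : nat -> V -> bool) : V * nat -> V * nat -> Prop :=
  clos_refl_trans (V * nat) (leadsto sched).

Fixpoint lifted (lift0 : V -> int) (sched : nat -> V -> bool) (t : nat) (p : V) : int :=
  match t with
  | 0%N => lift0 p
  | t0.+1 => lifted lift0 sched t0 p + (sched t0 p)%:Z
  end.

Definition is_Ck (lift0 : V -> int) (sched : nat -> V -> bool) (k : int)
    (C : V -> nat) : Prop :=
  forall p, lifted lift0 sched (C p) p = k /\
            forall t, (t < C p)%N -> lifted lift0 sched t p <> k.

Definition is_cut (sched : nat -> V -> bool) (C : V -> nat) : Prop :=
  forall p, event sched p (C p).

Definition coherent (sched : nat -> V -> bool) (C : V -> nat) : Prop :=
  is_cut sched C /\
  forall q t' p t, preceq sched (q, t') (p, t) -> preceq sched (p, t) (p, C p) ->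
    preceq sched (q, t') (q, C q).

Definition cut_le (sched : nat -> V -> bool) (C C' : V -> nat) : Prop :=
  forall p t, event sched p t -> (t <= C p)%N -> (t <= C' p)%N.

Definition in_segment (sched : nat -> V -> bool) (C C' : V -> nat) (p : V) (t : nat) : Prop :=
  [/\ event sched p t, preceq sched (p, C p) (p, t) & preceq sched (p, t) (p, C' p)].

Definition wavelet (sched : nat -> V -> bool) (rho : nat) (C C' : V -> nat)
    (decide : V -> nat -> Prop) : Prop :=
  [/\ coherent sched C /\ coherent sched C', cut_le sched C C',
      (exists p t, decide p t),
      (forall p t, decide p t -> in_segment sched C C' p t) &
      forall p t, decide p t -> forall q, dist_le p q rho ->
        exists t', in_segment sched C C' q t' /\ preceq sched (q, t') (p, t)].

End Unison.

From Stdlib Require Import Relation_Operators ClassicalEpsilon.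
From mathcomp Require Import all_boot all_order all_algebra.
From mathcomp Require Import zify.
Set Implicit Arguments. Unset Strict Implicit. Unset Printing Implicit Defensive.
Import Order.TTheory GRing.Theory Num.Theory.
Local Open Scope ring_scope.

(* The proof lifts the clocks from Z/MZ to the integers.  Call L : V -> int a
   lifting of a configuration c when L p = c p (mod M) and L q <= L p + 1 on
   every edge {p,q}.  In a WU_0 configuration the delays are intrinsic, so
   L0 p = bot0 + delta(p0,p) is a lifting, and L0 p <= bot0 + D because a
   delay is at most the length of the path.  Since M >= 3, an enabled process
   is a local minimum of any lifting; hence incrementing it keeps a lifting,
   and the lifted clocks form a lifting at every time.  Lifted clocks grow by
   one exactly at events and, under a fair daemon, without bound, so the cut
   C_v (first time each clock reaches v) exists whenever v >= max L0.
   Two facts about causality then give the theorem: a causal step never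
   decreases the lifted clock (so C_v is coherent), and walking back along a
   path of length n from an event with lifted clock v + n meets causal
   predecessors with lifted clock >= v (so [C_v, C_(v+rho)] is a rho-wavelet). *)

Lemma eqz_mod_small (d x y : int) :
  (x = y %[mod d])%Z -> - d < x - y < d -> x = y.
Proof.
move/eqP; rewrite eqz_mod_dvd => /dvdzP[q xy_eq] xy_small.
have [q0|[q_pos|q_neg]] : q = 0 \/ 1 <= q \/ q <= -1 by lia.
- by apply/eqP; rewrite -subr_eq0 xy_eq q0 mul0r.
- nia.
- nia.
Qed.

Section Delays.
Variables (V : finType) (e : rel V) (M : nat).
Hypothesis M_gt0 : (0 < M)%N.

Lemma ominus_mod (b a : int) : (ominus M b a = b - a %[mod M])%Z.
Proof.
rewrite /ominus /res; case: ifP => _; first exact: modz_mod.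
by rewrite modzNm opprB.
Qed.

Lemma ominus_le1 (b a : int) : ominus M b a <= 1.
Proof.
rewrite /ominus; case: ifP => // _.
have : 0 <= res M (a - b) by apply: modz_ge0; lia.
lia.
Qed.

Lemma delay_le_size (c : V -> nat) x s : delay M c x s <= (size s)%:Z.
Proof.
elim: s x => [|y s IH] x //=.
have := IH y; have := ominus_le1 (c y)%:Z (c x)%:Z; lia.
Qed.

Lemma delay_mod (c : V -> nat) x s :
  (delay M c x s = (c (last x s))%:Z - (c x)%:Z %[mod M])%Z.
Proof.
elim: s x => [|y s IH] x /=; first by rewrite subrr.
by rewrite -modzDm IH ominus_mod modzDm addrC addrA subrK.
Qed.

Lemma delay_rcons (c : V -> nat) x s y :
  delay M c x (rcons s y) = delay M c x s + ominus M (c y)%:Z (c (last x s))%:Z.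
Proof.
elim: s x => [|z s IH] x /=; first by rewrite addr0 add0r.
by rewrite IH addrA.
Qed.

Lemma delta_path (c : V -> nat) p s :
  WU0 e M c -> path e p s -> delta e M c p (last p s) = delay M c p s.
Proof.
move=> [_ intrinsic] ps; rewrite /delta.
have [|s' [ps' last_s' <-]] := epsilon_spec (inhabits (0 : int))
   (fun d => exists s', [/\ path e p s', last p s' = last p s & delay M c p s' = d]).
  by exists (delay M c p s), s.
exact: intrinsic.
Qed.
End Delays.

Section Lifting.
Variables (V : finType) (e : rel V) (M : nat).
Hypothesis M_ge3 : (3 <= M)%N.
Let M_gt0 : (0 < M)%N := ltnW (ltnW M_ge3).

Definition lifting (c : V -> nat) (L : V -> int) : Prop :=
  (forall p, (L p = (c p)%:Z %[mod M])%Z) /\ (forall p q, e p q -> L q <= L p + 1).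

Definition initial_lifting (c : V -> nat) (p0 p : V) : int :=
  (c p0)%:Z + delta e M c p0 p.

Lemma initial_lifting_spec (c : V -> nat) p0 :
  WU0 e M c -> connected e -> lifting c (initial_lifting c p0).
Proof.
move=> wu0 conn; split=> [p|p q pq].
  have [s [ps <-]] := conn p0 p.
  rewrite /initial_lifting (delta_path wu0 ps) -modzDmr delay_mod modzDmr.
  congr modz; lia.
have [s [ps last_s]] := conn p0 p.
have psq : path e p0 (rcons s q) by rewrite rcons_path ps last_s.
have delta_q : delta e M c p0 q = delay M c p0 (rcons s q).
  by rewrite -(delta_path wu0 psq) last_rcons.
rewrite /initial_lifting delta_q -last_s (delta_path wu0 ps) delay_rcons last_s.
have := ominus_le1 M_gt0 (c q)%:Z (c p)%:Z; lia.
Qed.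

Lemma initial_lifting_le (c : V -> nat) p0 p r :
  WU0 e M c -> dist_le e p0 p r -> initial_lifting c p0 p <= (c p0)%:Z + r%:Z.
Proof.
move=> wu0 [s [ps <- size_s]].
rewrite /initial_lifting (delta_path wu0 ps).
have := delay_le_size M_gt0 c p0 s; lia.
Qed.

(* In a lifted configuration an enabled process is a local minimum: its
   neighbours' clocks are equal to or one above its own, the lifted values are
   within one of each other, and M >= 3 rules out wrapping around. *)
Lemma enabled_local_min (c : V -> nat) L p q : symmetric e ->
  lifting c L -> enabled e M c p -> e p q -> L p <= L q.
Proof.
move=> sym [L_mod L_edge] en_p pq.
have qp : e q p by rewrite sym.
have le_q := L_edge p q pq; have le_p := L_edge q p qp.
case: (en_p q pq) => c_q.
- have : L q = L p.
    by apply: (@eqz_mod_small M); [rewrite !L_mod c_q | lia].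
  lia.
- have : L q = L p + 1.
    apply: (@eqz_mod_small M); last by lia.
    by rewrite L_mod c_q -modz_nat modz_mod -modzDml L_mod modzDml -addn1 PoszD.
  lia.
Qed.
End Lifting.

Section LiftedClocks.
Variables (V : finType) (sched : nat -> V -> bool) (lift0 : V -> int).

Local Notation L := (lifted lift0 sched).

Lemma event_succ p t : event sched p t.+1 <-> sched t p.
Proof.
split=> [[//|[t0 [[->] //]]] | sp]; by right; exists t.
Qed.

Lemma lifted_event p t : event sched p t -> (0 < t)%N -> L t p = L t.-1 p + 1.
Proof. by case: t => // t /event_succ /= ->. Qed.

Lemma lifted_mono p : {homo L^~ p : t1 t2 / (t1 <= t2)%N >-> t1 <= t2}.
Proof.
move=> t1 t2 /subnKC <-; elim: (t2 - t1)%N => [|n IH]; first by rewrite addn0.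
rewrite addnS /=; lia.
Qed.

Lemma lifted_no_event p t1 t2 : (t1 <= t2)%N ->
  (forall s, (t1 < s <= t2)%N -> ~ event sched p s) -> L t2 p = L t1 p.
Proof.
elim: t2 => [|t2 IH]; first by rewrite leqn0 => /eqP ->.
rewrite leq_eqVlt ltnS => /orP[/eqP -> //|le12] no_ev /=.
have /negbTE -> : ~~ sched t2 p.
  by apply/negP => sp; apply: (no_ev t2.+1); [lia | apply/event_succ].
by rewrite addr0 IH // => s s_in; apply: no_ev; lia.
Qed.

Lemma last_event_exists p t : (0 < t)%N -> exists t', last_event_before sched p t' t.
Proof.
elim: t => // t IH _; case: (posnP t) => [-> | t_gt0].
  by exists 0%N; split=> [||s]; [|left|lia].
case sp: (sched t.-1 p).
  exists t; split=> [||s]; [|right; exists t.-1; rewrite prednK|]; lia.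
have [t' [lt_t' ev_t' no_ev]] := IH t_gt0.
exists t'; split=> //; first lia.
move=> s lt_s lt_st; case: (ltngtP s t) => [lt_s_t|lt_t_s|->]; first exact: no_ev.
  lia.
by rewrite -(prednK t_gt0) => /event_succ; rewrite sp.
Qed.

Lemma last_event_lifted p t' t : last_event_before sched p t' t -> L t' p = L t.-1 p.
Proof.
case=> lt_t' _ no_ev; symmetry; apply: lifted_no_event => [|s s_in]; first lia.
by apply: no_ev; lia.
Qed.

(* Lifted clocks move by steps of at most one, so they take every intermediate value. *)
Lemma lifted_ivt p (v : int) t : lift0 p <= v <= L t p -> exists2 t0, (t0 <= t)%N & L t0 p = v.
Proof.
elim: t => [|t IH] /= v_in; first by exists 0%N => //=; lia.
have [le_v|lt_v] := lerP v (L t p).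
  by have [|t0 le_t0 <-] := IH; [lia | exists t0; first exact: leqW].
by exists t.+1 => //=; move: v_in lt_v => /=; case: (sched t p) => /=; lia.
Qed.

Section Cut.
Variables (v : int) (C : V -> nat).
Hypothesis v_ge : forall p, lift0 p <= v.
Hypothesis C_v : is_Ck lift0 sched v C.

Lemma Ck_value p : L (C p) p = v.
Proof. by case: (C_v p). Qed.

Lemma Ck_before p t : (t < C p)%N -> L t p < v.
Proof.
move=> lt_t; rewrite ltNge; apply/negP => le_v.
have [|t0 le_t0] := @lifted_ivt p v t; first by rewrite v_ge.
by case: (C_v p) => _; apply; apply: leq_ltn_trans lt_t.
Qed.

Lemma Ck_after p t : (C p <= t)%N -> v <= L t p.
Proof. by move=> le_t; rewrite -(Ck_value p) lifted_mono. Qed.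

(* C_v is a cut: the clock of p reaches v through an increment (or initially). *)
Lemma Ck_event p : event sched p (C p).
Proof.
case Cp: (C p) => [|t]; first by left.
apply/event_succ; apply: contraT => /negbTE sp.
have lt_v : L t p < v by apply: Ck_before; rewrite Cp.
have := Ck_value p; rewrite Cp /= sp addr0; lia.
Qed.
End Cut.

Lemma Ck_mono (v w : int) C C' : (forall p, lift0 p <= v) -> v <= w ->
  is_Ck lift0 sched v C -> is_Ck lift0 sched w C' -> forall p, (C p <= C' p)%N.
Proof.
move=> v_ge le_vw C_v C_w p; rewrite leqNgt; apply/negP => /(Ck_before v_ge C_v).
by rewrite (Ck_value C_w); lia.
Qed.

Hypothesis fair : forall t p, exists t', (t <= t')%N /\ sched t' p.

Lemma lifted_unbounded p (n : nat) : exists t, lift0 p + n%:Z <= L t p.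
Proof.
elim: n => [|n [t IH]]; first by exists 0%N => /=; lia.
have [t' [le_tt' st']] := fair t p.
exists t'.+1; have := lifted_mono p le_tt'; rewrite /= st' /=; lia.
Qed.

Lemma Ck_exists (v : int) : (forall p, lift0 p <= v) -> exists C, is_Ck lift0 sched v C.
Proof.
move=> v_ge; have reach p : exists n, L n p == v.
  have [t le_vt] := lifted_unbounded p `|v - lift0 p|%N.
  have [|t0 _ <-] := @lifted_ivt p v t; last by exists t0.
  by have := v_ge p; move: le_vt => /=; lia.
exists (fun p => ex_minn (reach p)) => p.
case: ex_minnP => m /eqP L_m min_m; split=> // t lt_tm /eqP /min_m.
by rewrite leqNgt lt_tm.
Qed.
End LiftedClocks.

Section Causality.
Variables (V : finType) (e : rel V) (sched : nat -> V -> bool).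

Lemma preceq_event a b : preceq e sched a b -> a = b \/ event sched a.1 a.2.
Proof.
elim=> [[q t'] [p t] [_ _ _ [_ ev_t' _]]|x|x y z _ [-> //|ev_x] _ _]; by [right | left].
Qed.

Lemma local_chain p t1 t2 : event sched p t1 -> event sched p t2 -> (t1 <= t2)%N ->
  preceq e sched (p, t1) (p, t2).
Proof.
move=> ev1; elim/ltn_ind: t2 => t2 IH ev2 le12.
case: (ltngtP t1 t2) le12 => // [lt12 _|<- _]; last exact: rt_refl.
have [t' [lt_t' ev' no_ev]] := @last_event_exists V sched p t2 (leq_ltn_trans (leq0n _) lt12).
have le1' : (t1 <= t')%N by rewrite leqNgt; apply/negP => lt'1; apply: (no_ev t1).
apply: rt_trans (IH t' lt_t' ev' le1') (rt_step _ _ _ _ _).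
by split=> //; [lia | left].
Qed.
End Causality.

Section Execution.
Variables (V : finType) (e : rel V) (M : nat) (gamma : nat -> V -> nat)
  (sched : nat -> V -> bool) (lift0 : V -> int).
Hypothesis M_ge3 : (3 <= M)%N.
Hypothesis e_sym : symmetric e.
Hypothesis exec : execution e M gamma sched.

Local Notation L := (lifted lift0 sched).

Lemma sched_enabled t p : sched t p -> enabled e M (gamma t) p.
Proof. by case: (exec.2 t) => _ en _; apply: en. Qed.

Lemma gamma_next t p :
  gamma t.+1 p = if sched t p then ((gamma t p).+1 %% M)%N else gamma t p.
Proof. by case: (exec.2 t) => _ _ nxt; apply: nxt. Qed.

(* One step of the dynamics preserves liftings: an incrementing process is a
   local minimum, so it cannot overtake a neighbour by more than one. *)
Lemma lifting_step t :
  lifting e M (gamma t) (L t) -> lifting e M (gamma t.+1) (L t.+1).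
Proof.
move=> lift_t; have [L_mod L_edge] := lift_t; split=> [p|p q pq] /=.
  rewrite gamma_next; case: (sched t p); last by rewrite addr0 L_mod.
  by rewrite -modz_nat modz_mod -modzDml L_mod modzDml -addn1 PoszD.
have := L_edge p q pq.
case sq: (sched t q); case: (sched t p) => /=; try lia.
have qp : e q p by rewrite e_sym.
have := enabled_local_min M_ge3 e_sym lift_t (sched_enabled sq) qp; lia.
Qed.

Hypothesis lift0_lifting : lifting e M (gamma 0) lift0.

Lemma lifting_all t : lifting e M (gamma t) (L t).
Proof. by elim: t => [|t IH]; [exact: lift0_lifting | exact: lifting_step]. Qed.

Lemma leadsto_lifted q t' p t : leadsto e sched (q, t') (p, t) -> L t' q <= L t p.
Proof.
case=> t_gt0 ev_t q_near last_q.
rewrite (last_event_lifted lift0 last_q) (lifted_event lift0 ev_t t_gt0).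
case: q_near => [-> | pq]; first lia.
by have [_ L_edge] := lifting_all t.-1; have := L_edge p q pq; lia.
Qed.

Lemma preceq_lifted a b : preceq e sched a b -> L a.2 a.1 <= L b.2 b.1.
Proof.
elim=> [[q t'] [p t] /leadsto_lifted //|//|x y z _ le_xy _ le_yz].
exact: le_trans le_yz.
Qed.

(* The last event of a neighbour q before an event of p causes it and lags at
   most one behind: p was a local minimum of the lifting when it incremented. *)
Lemma back_step p t q : event sched p t -> (0 < t)%N -> e p q ->
  exists t', [/\ event sched q t', preceq e sched (q, t') (p, t) & L t p - 1 <= L t' q].
Proof.
move=> ev_t t_gt0 pq.
have [t' last_q] := last_event_exists sched q t_gt0.
have sp : sched t.-1 p by move: ev_t; rewrite -(prednK t_gt0) => /event_succ.
exists t'; split; first by case: last_q.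
  by apply: rt_step; split=> //; right.
have := enabled_local_min M_ge3 e_sym (lifting_all t.-1) (sched_enabled sp) pq.
rewrite (last_event_lifted lift0 last_q) (lifted_event lift0 ev_t t_gt0); lia.
Qed.

Lemma back_path s p t : path e p s -> event sched p t ->
  (forall x, lift0 x + (size s)%:Z <= L t p) ->
  exists t', [/\ event sched (last p s) t', preceq e sched (last p s, t') (p, t)
               & L t p - (size s)%:Z <= L t' (last p s)].
Proof.
elim: s p t => [|y s IH] p t /=.
  by move=> _ ev_t _; exists t; split=> //; [apply: rt_refl | lia].
move=> /andP[py ys] ev_t high.
have t_gt0 : (0 < t)%N by case: t ev_t high => // _ /(_ p) /=; lia.
have [t1 [ev1 pre1 L1]] := back_step ev_t t_gt0 py.
have [|t' [ev' pre' L']] := IH y t1 ys ev1; first by move=> x; have := high x; lia.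
by exists t'; split=> //; [exact: rt_trans pre' pre1 | lia].
Qed.

(* C_v is coherent: a causal predecessor of an event before C_v p has lifted
   clock at most v, so it does not lie beyond the cut. *)
Lemma Ck_coherent (v : int) C : (forall p, lift0 p <= v) -> is_Ck lift0 sched v C ->
  coherent e sched C.
Proof.
move=> v_ge C_v; split; first exact: Ck_event v_ge C_v.
move=> q t' p t pre_qp pre_pC.
have := preceq_lifted (rt_trans _ _ _ _ _ pre_qp pre_pC); rewrite /= (Ck_value C_v) => L_le.
case: (preceq_event pre_qp) => [[-> ->] //|/= ev_t'].
apply: (local_chain e ev_t' (Ck_event v_ge C_v q)).
rewrite leqNgt; apply/negP => lt_Ct'.
have t'_gt0 : (0 < t')%N by apply: leq_ltn_trans lt_Ct'.
have : v <= L t'.-1 q by apply: (Ck_after C_v); rewrite -ltnS prednK.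
by move: L_le; rewrite (lifted_event lift0 ev_t' t'_gt0); lia.
Qed.

(* For v above every initial lifted clock, [C_v, C_(v+rho)] with the events of
   C_(v+rho) as decide events is a rho-wavelet; x0 only witnesses that V is
   nonempty, so that there is a decide event. *)
Lemma Ck_wavelet (v : int) rho C C' (x0 : V) : (forall p, lift0 p <= v) ->
  is_Ck lift0 sched v C -> is_Ck lift0 sched (v + rho%:Z) C' ->
  wavelet e sched rho C C' (fun p t => t = C' p).
Proof.
move=> v_ge C_v C'_v.
have v'_ge p : lift0 p <= v + rho%:Z by have := v_ge p; lia.
have le_CC' := Ck_mono v_ge (lerDl v rho%:Z) C_v C'_v.
have coh' := Ck_coherent v'_ge C'_v.
have in_seg q t : event sched q t -> (C q <= t)%N -> preceq e sched (q, t) (q, C' q) ->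
    in_segment e sched C C' q t.
  by move=> ev_t le_t pre; split=> //; exact: (local_chain e (Ck_event v_ge C_v q) ev_t le_t).
split=> //.
- by split=> //; exact: Ck_coherent v_ge C_v.
- by move=> p t _ le_t; apply: leq_trans le_t (le_CC' p).
- by exists x0, (C' x0).
- move=> p t ->; apply: in_seg (Ck_event v'_ge C'_v p) (le_CC' p) (rt_refl _ _ _).
- move=> p t -> q [s [ps <- size_s]].
  have [|t' [ev' pre' L']] := back_path ps (Ck_event v'_ge C'_v p).
    by move=> x; rewrite (Ck_value C'_v); have := v_ge x; lia.
  exists t'; split=> //; apply: in_seg => //.
  + rewrite leqNgt; apply/negP => /(Ck_before v_ge C_v).
    by move: L'; rewrite (Ck_value C'_v); lia.
  + exact: coh'.2 _ _ _ _ pre' (rt_refl _ _ _).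
Qed.
End Execution.

Theorem theorem1 (V : finType) (e : rel V) (M : nat) (D : nat)
    (gamma : nat -> V -> nat) (sched : nat -> V -> bool) (p0 : V)
    (k : int) (rho : nat) :
    (3 <= M)%N -> (2 <= #|V|)%N ->
    symmetric e -> irreflexive e -> connected e ->
    is_diameter e D ->
    execution e M gamma sched ->
    WU0 e M (gamma 0%N) ->
    (forall t p, exists t', (t <= t')%N /\ sched t' p) ->
    (forall q, 0 <= delta e M (gamma 0%N) p0 q) ->
    let bot0 : int := (gamma 0%N p0)%:Z in
    let lift0 : V -> int := fun p => bot0 + delta e M (gamma 0%N) p0 p in
    bot0 + D%:Z <= k -> (1 <= rho)%N ->
    exists C C' : V -> nat,
      [/\ is_Ck lift0 sched k C, is_Ck lift0 sched (k + rho%:Z) C',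
          coherent e sched C /\ coherent e sched C', cut_le sched C C' &
          wavelet e sched rho C C' (fun p t => t = C' p)].
Proof.
move=> M_ge3 _ e_sym _ conn [diam _] exec wu0 fair _ bot0 lift0 k_ge _.
have lift0_lifting : lifting e M (gamma 0%N) lift0 := initial_lifting_spec M_ge3 p0 wu0 conn.
have lift0_le p : lift0 p <= k.
  have := initial_lifting_le M_ge3 wu0 (diam p0 p).
  by rewrite /initial_lifting /lift0 /bot0 in k_ge *; lia.
have lift0_le' p : lift0 p <= k + rho%:Z by have := lift0_le p; lia.
have [C C_k] := Ck_exists fair lift0_le.
have [C' C'_k] := Ck_exists fair lift0_le'.
have wav := Ck_wavelet M_ge3 e_sym exec lift0_lifting p0 lift0_le C_k C'_k.
by exists C, C'; case: (wav) => coh le_CC' _ _ _; split.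
Qed.
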